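(* Let $G,H,K$ be graphs. (1) $G\mid(G\otimes H)$ and $H\mid(G\otimes H)$. (2) If $G\mid H$ and $H\mid K$, then $G\mid K$. (3) If $G\mid H$ and $H\mid G$, then $G$ and $H$ are isomorphic.
   Context: A weight function on finite $U$ is $\alpha:U\times U\to\mathbb{R}$, $\alpha\ge0$, symmetric, summing to $1$; degree $p(u)=\sum_{u'}\alpha(u,u')$; a graph is $(U,\alpha)$. For $G=(U,\alpha)$, $H=(V,\beta)$, the tensor product is $G\otimes H=(U\times V,\alpha\otimes\beta)$ with $(\alpha\otimes\beta)((u,v),(u',v'))=\alpha(u,u')\beta(v,v')$. For graphs $G=(U,\alpha)$, $H=(V,\beta)$ with degrees $p,q$, $H\mid G$ ($H$ is a factor of $G$) means there is a surjective $\phi:U\to V$ with (i) $q(v)=\sum_{u\in\phi^{-1}(v)}p(u)$ for all $v$, and (ii) $q(v)\sum_{u'\in\phi^{-1}(v')}\alpha(u,u')=p(u)\beta(v,v')$ for all $v,v'\in V$, $u\in\phi^{-1}(v)$. $G$ and $H$ are isomorphic if there is a bijection $f:U\to V$ with $\alpha(u,u')=\beta(f(u),f(u'))$ for all $u,u'$. *)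

From HB Require Import structures.
From mathcomp Require Import all_boot all_order all_algebra.
From mathcomp Require Import reals.
Set Implicit Arguments. Unset Strict Implicit. Unset Printing Implicit Defensive.
Import Order.TTheory GRing.Theory Num.Theory.
Local Open Scope ring_scope.

Section Graphs.
Variable R : realType.

Definition is_weight (U : finType) (alpha : U -> U -> R) : Prop :=
  (forall u u', 0 <= alpha u u') /\
  (forall u u', alpha u u' = alpha u' u) /\
  \sum_(u : U) \sum_(u' : U) alpha u u' = 1.

Definition deg (U : finType) (alpha : U -> U -> R) (u : U) : R :=
  \sum_(u' : U) alpha u u'.

Definition tensor (U V : finType) (alpha : U -> U -> R) (beta : V -> V -> R)
  (x y : (U * V)%type) : R := alpha x.1 y.1 * beta x.2 y.2.

(* is_factor beta alpha : the graph (V,beta) is a factor of (U,alpha), i.e. H | G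
   with H = (V,beta), G = (U,alpha), q = deg beta, p = deg alpha. *)
Definition is_factor (V U : finType) (beta : V -> V -> R) (alpha : U -> U -> R)
  : Prop :=
  exists phi : U -> V,
    (forall v, exists u, phi u = v) /\
    (forall v, deg beta v = \sum_(u | phi u == v) deg alpha u) /\
    (forall v v' u, phi u = v ->
       deg beta v * (\sum_(u' | phi u' == v') alpha u u') = deg alpha u * beta v v').

Definition isomorphic (U V : finType) (alpha : U -> U -> R) (beta : V -> V -> R)
  : Prop :=
  exists f : U -> V, bijective f /\ forall u u', alpha u u' = beta (f u) (f u').

End Graphs.

(* The map of a factor preserves total degree fibrewise and rescales edge
   weights by the degree ratio [p(u) / q(phi u)].  Projections of a tensor
   product are factor maps because the other factor has total degree 1;
   composing factor maps multiplies the degree ratios, which is well defined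
   since a vertex over a vertex of degree zero has degree zero itself; and
   mutual factors have equally many vertices, so the factor map is a
   bijection whose degree ratio is 1, i.e. an isomorphism. *)
From HB Require Import structures.
From mathcomp Require Import all_boot all_order all_algebra.
From mathcomp Require Import reals.
Set Implicit Arguments. Unset Strict Implicit. Unset Printing Implicit Defensive.
Import Order.TTheory GRing.Theory Num.Theory.
Local Open Scope ring_scope.

Section Surjective.
Variables (A B : finType) (f : A -> B).
Hypothesis f_surj : forall b, exists a, f a = b.

Let f_surjb b : exists a, f a == b.
Proof. by have [a <-] := f_surj b; exists a. Qed.

Let g b := xchoose (f_surjb b).

Let gK : cancel g f.
Proof. by move=> b; apply/eqP; exact: (xchooseP (f_surjb b)). Qed.

Lemma surj_leq_card : (#|B| <= #|A|)%N.
Proof. exact: leq_card (can_inj gK). Qed.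

Lemma surj_card_bij : (#|A| <= #|B|)%N -> bijective f.
Proof. by move=> leAB; apply: bij_can_bij gK; apply: inj_card_bij (can_inj gK) _. Qed.

End Surjective.

Section Degrees.
Variable R : realType.

Lemma deg_ge0 (U : finType) (alpha : U -> U -> R) u :
  (forall u u', 0 <= alpha u u') -> 0 <= deg alpha u.
Proof. by move=> alpha_ge0; apply: sumr_ge0 => u' _. Qed.

Lemma deg_eq0 (U : finType) (alpha : U -> U -> R) u u' :
  (forall u u', 0 <= alpha u u') -> deg alpha u = 0 -> alpha u u' = 0.
Proof. by move=> alpha_ge0 /psumr_eq0P-> // x _. Qed.

Lemma deg_tensor (U V : finType) (alpha : U -> U -> R) (beta : V -> V -> R) x :
  deg (tensor alpha beta) x = deg alpha x.1 * deg beta x.2.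
Proof.
rewrite /deg /tensor -(pair_bigA _ (fun u v => alpha x.1 u * beta x.2 v)) /=.
by rewrite mulr_suml; apply: eq_bigr => u _; rewrite mulr_sumr.
Qed.

Lemma sum_deg1_inhabited (U : finType) (alpha : U -> U -> R) :
  \sum_u deg alpha u = 1 -> inhabited U.
Proof.
case: (pickP (@predT U)) => [u _ _|U0]; first exact: inhabits u.
by rewrite big_pred0 // => /eqP; rewrite eq_sym oner_eq0.
Qed.

End Degrees.

Section Fibres.
Variable R : realType.

Lemma sum_fibre_fst (U V : finType) (F : U * V -> R) u :
  \sum_(x | x.1 == u) F x = \sum_v F (u, v).
Proof.
transitivity (\sum_(i | i == u) \sum_v F (i, v)); last exact: big_pred1_eq.
by rewrite pair_big_dep; apply: eq_big => [[i v]|[i v] _]; rewrite ?andbT.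
Qed.

Lemma sum_fibre_snd (U V : finType) (F : U * V -> R) v :
  \sum_(x | x.2 == v) F x = \sum_u F (u, v).
Proof.
transitivity (\sum_(j | j == v) \sum_u F (u, j)); last exact: big_pred1_eq.
by rewrite exchange_big pair_big_dep; apply: eq_big => [[u j]|[u j] _].
Qed.

Lemma sum_comp_fibre (U V W : finType) (phi : V -> U) (psi : W -> V) (F : W -> R) u :
  \sum_(w | phi (psi w) == u) F w = \sum_(v | phi v == u) \sum_(w | psi w == v) F w.
Proof.
rewrite (partition_big psi (fun v => phi v == u)) //.
apply: eq_bigr => v phi_v; apply: eq_bigl => w.
by case: (eqVneq (psi w) v) => [->|_]; rewrite ?phi_v ?andbF.
Qed.

End Fibres.

Section FactorMap.
Variables (R : realType) (U V : finType) (alpha : U -> U -> R) (beta : V -> V -> R).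
Variable phi : U -> V.
Hypothesis alpha_ge0 : forall u u', 0 <= alpha u u'.
Hypothesis deg_phi : forall v, deg beta v = \sum_(u | phi u == v) deg alpha u.
Hypothesis weight_phi : forall v v' u, phi u = v ->
  deg beta v * (\sum_(u' | phi u' == v') alpha u u') = deg alpha u * beta v v'.

Lemma deg_fibre_eq0 u : deg beta (phi u) = 0 -> deg alpha u = 0.
Proof. by rewrite deg_phi => /psumr_eq0P-> // x _; apply: deg_ge0. Qed.

(* Holds also when [deg beta (phi u) = 0]: then [x / 0 = 0] and [deg alpha u = 0]. *)
Lemma mul_deg_ratio u :
  deg alpha u / deg beta (phi u) * deg beta (phi u) = deg alpha u.
Proof.
have [q0|qn0] := eqVneq (deg beta (phi u)) 0; last exact: divfK.
by rewrite q0 mulr0 deg_fibre_eq0.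
Qed.

Lemma sum_fibre_weight u v' :
  \sum_(u' | phi u' == v') alpha u u' =
    deg alpha u / deg beta (phi u) * beta (phi u) v'.
Proof.
have [q0|qn0] := eqVneq (deg beta (phi u)) 0.
  rewrite q0 invr0 mulr0 mul0r; apply: big1 => u' _.
  exact/deg_eq0/deg_fibre_eq0.
by apply: (mulfI qn0); rewrite weight_phi // mulrA mulrCA divff // mulr1.
Qed.

Lemma weight_inj_factor u u' : (forall v v', 0 <= beta v v') -> injective phi ->
  alpha u u' = beta (phi u) (phi u').
Proof.
move=> beta_ge0 phi_inj.
have fibre1 v : [pred x | phi x == phi v] =1 pred1 v.
  by move=> x /=; rewrite (inj_eq phi_inj).
have deg_phiE : deg beta (phi u) = deg alpha u.
  by rewrite deg_phi; exact: big_pred1 (fibre1 u).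
have := sum_fibre_weight u (phi u'); rewrite (big_pred1 u' (fibre1 u')) deg_phiE.
have [p0|pn0] := eqVneq (deg alpha u) 0; last by rewrite divff ?mul1r.
by rewrite !deg_eq0 // deg_phiE.
Qed.

End FactorMap.

Section Factors.
Variable R : realType.

Lemma tensor_factor_l (U V : finType) (alpha : U -> U -> R) (beta : V -> V -> R) :
  \sum_v deg beta v = 1 -> is_factor alpha (tensor alpha beta).
Proof.
move=> beta1; have [v0] := sum_deg1_inhabited beta1.
exists fst; split; [by move=> u; exists (u, v0) | split].
- move=> u; rewrite sum_fibre_fst.
  by under eq_bigr do rewrite deg_tensor /=; rewrite -mulr_sumr beta1 mulr1.
- move=> u u' [x v] /= <-; rewrite sum_fibre_fst deg_tensor /tensor /= -mulr_sumr.
  by rewrite -/(deg beta v) mulrA mulrAC.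
Qed.

Lemma tensor_factor_r (U V : finType) (alpha : U -> U -> R) (beta : V -> V -> R) :
  \sum_u deg alpha u = 1 -> is_factor beta (tensor alpha beta).
Proof.
move=> alpha1; have [u0] := sum_deg1_inhabited alpha1.
exists snd; split; [by move=> v; exists (u0, v) | split].
- move=> v; rewrite sum_fibre_snd.
  by under eq_bigr do rewrite deg_tensor /=; rewrite -mulr_suml alpha1 mul1r.
- move=> v v' [u x] /= <-; rewrite sum_fibre_snd deg_tensor /tensor /= -mulr_suml.
  by rewrite -/(deg alpha u) mulrCA mulrA.
Qed.

Lemma factor_trans (U V W : finType)
    (alpha : U -> U -> R) (beta : V -> V -> R) (gamma : W -> W -> R) :
  (forall w w', 0 <= gamma w w') ->
  is_factor alpha beta -> is_factor beta gamma -> is_factor alpha gamma.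
Proof.
move=> gamma_ge0 [phi [phi_surj [deg_phi weight_phi]]].
move=> [psi [psi_surj [deg_psi weight_psi]]].
exists (fun w => phi (psi w)); split; [|split].
- move=> u; have [v <-] := phi_surj u; have [w <-] := psi_surj v.
  by exists w.
- move=> u; rewrite deg_phi [RHS]sum_comp_fibre.
  by apply: eq_bigr => v _; apply: deg_psi.
- move=> _ u' w <-; rewrite sum_comp_fibre.
  under eq_bigr do rewrite (sum_fibre_weight gamma_ge0 deg_psi weight_psi).
  rewrite -mulr_sumr mulrCA weight_phi // mulrA.
  by rewrite (mul_deg_ratio gamma_ge0 deg_psi).
Qed.

Lemma factor_antisym (U V : finType) (alpha : U -> U -> R) (beta : V -> V -> R) :
  (forall u u', 0 <= alpha u u') -> (forall v v', 0 <= beta v v') ->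
  is_factor alpha beta -> is_factor beta alpha -> isomorphic alpha beta.
Proof.
move=> alpha_ge0 beta_ge0 [phi [phi_surj [deg_phi weight_phi]]] [psi [psi_surj _]].
have [g phiK gK] := surj_card_bij phi_surj (surj_leq_card psi_surj).
exists g; split; first by exists phi.
move=> u u'; have phi_inj := can_inj phiK.
by rewrite (weight_inj_factor beta_ge0 deg_phi weight_phi _ _ alpha_ge0 phi_inj) !gK.
Qed.

End Factors.

Theorem proposition4p3 (R : realType) (U V W : finType)
  (alpha : U -> U -> R) (beta : V -> V -> R) (gamma : W -> W -> R) :
  is_weight alpha -> is_weight beta -> is_weight gamma ->
  (* (1) G | G (x) H and H | G (x) H *)
  (is_factor alpha (tensor alpha beta) /\ is_factor beta (tensor alpha beta)) /\
  (* (2) G | H -> H | K -> G | K *)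
  (is_factor alpha beta -> is_factor beta gamma -> is_factor alpha gamma) /\
  (* (3) G | H -> H | G -> G and H isomorphic *)
  (is_factor alpha beta -> is_factor beta alpha -> isomorphic alpha beta).
Proof.
move=> [alpha_ge0 [_ alpha1]] [beta_ge0 [_ beta1]] [gamma_ge0 _].
split; [split|split].
- exact: tensor_factor_l.
- exact: tensor_factor_r.
- exact: factor_trans.
- exact: factor_antisym.
Qed.
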